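(* Let $S$ be a semiring and $\Sigma$ an alphabet. The set $\mathrm{Rev}(S,\Sigma)$ is closed under addition and under both left and right scalar multiplication: if $r,s\in\mathrm{Rev}(S,\Sigma)$ and $\alpha\in S$, then $r+s$, $\alpha r$ and $r\alpha$ belong to $\mathrm{Rev}(S,\Sigma)$, where $(\alpha r,w)=\alpha\,(r,w)$ and $(r\alpha,w)=(r,w)\,\alpha$ for all $w\in\Sigma^*$.
   Context: A semiring $(S,+,\cdot,0,1)$ has $(S,+,0)$ a commutative monoid, $(S,\cdot,1)$ a monoid, $\cdot$ distributing over $+$ on both sides and $0$ absorbing. A formal power series over $S$ and a finite nonempty alphabet $\Sigma$ is a map $r\colon \Sigma^*\to S$, with value $(r,w)$ at $w$; addition is pointwise. A weighted automaton over $S$ and $\Sigma$ is $\mathcal{A}=(Q,\sigma,\iota,\tau)$ with $Q$ finite, $\sigma\colon Q\times\Sigma\times Q\to S$, $\iota,\tau\colon Q\to S$. A run on $w=a_1\cdots a_t$ is $q_0a_1q_1\cdots a_tq_t$ with all $\sigma(q_{k-1},a_k,q_k)\neq0$; its weight is $\iota(q_0)\sigma(q_0,a_1,q_1)\cdots\sigma(q_{t-1},a_t,q_t)\tau(q_t)$, and $(\|\mathcal{A}\|,w)$ is the sum of weights of all runs on $w$. $\mathcal{A}$ is reversible if for all $p,p',q,q'\in Q$, $a\in\Sigma$: (i) $\sigma(p,a,q)\neq0\neq\sigma(p,a,q')$ implies $q=q'$; (ii) $\sigma(p,a,q)\neq0\neq\sigma(p',a,q)$ implies $p=p'$. $\mathrm{Rev}(S,\Sigma)$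 is the set of series realised by reversible weighted automata over $S$ and $\Sigma$. *)

From mathcomp Require Import all_boot all_algebra.
Set Implicit Arguments. Unset Strict Implicit. Unset Printing Implicit Defensive.
Import GRing.Theory.
Local Open Scope ring_scope.

(* Semiring: pzSemiRingType (0 = 1 allowed, as in the paper's definition).
   Alphabet: a finType Sigma (nonemptiness is a hypothesis of the theorem). *)

Definition series (S : pzSemiRingType) (Sigma : finType) := seq Sigma -> S.

Record wautomaton (S : pzSemiRingType) (Sigma : finType) := WAut {
  wstate : finType;
  wtrans : wstate -> Sigma -> wstate -> S;
  winit : wstate -> S;
  wfin : wstate -> S }.

Section Behaviour.
Variables (S : pzSemiRingType) (Sigma : finType) (A : wautomaton S Sigma).

Definition is_run (w : seq Sigma) (qs : {ffun 'I_(size w).+1 -> wstate A}) : bool :=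
  [forall k : 'I_(size w),
     wtrans (qs (widen_ord (leqnSn _) k)) (tnth (in_tuple w) k) (qs (lift ord0 k)) != 0].

Definition run_weight (w : seq Sigma) (qs : {ffun 'I_(size w).+1 -> wstate A}) : S :=
  winit (qs ord0) *
  (\prod_(k < size w)
      wtrans (qs (widen_ord (leqnSn _) k)) (tnth (in_tuple w) k) (qs (lift ord0 k))) *
  wfin (qs ord_max).

Definition behaviour : series S Sigma :=
  fun w => \sum_(qs : {ffun 'I_(size w).+1 -> wstate A} | is_run qs) run_weight qs.

Definition reversible : Prop :=
  (forall (p q q' : wstate A) (a : Sigma),
      wtrans p a q != 0 -> wtrans p a q' != 0 -> q = q') /\
  (forall (p p' q : wstate A) (a : Sigma),
      wtrans p a q != 0 -> wtrans p' a q != 0 -> p = p').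

End Behaviour.

Definition Rev (S : pzSemiRingType) (Sigma : finType) (r : series S Sigma) : Prop :=
  exists A : wautomaton S Sigma, reversible A /\ behaviour A = r.

Definition series_add (S : pzSemiRingType) (Sigma : finType) (r s : series S Sigma)
  : series S Sigma := fun w => r w + s w.
Definition series_lscale (S : pzSemiRingType) (Sigma : finType) (a : S) (r : series S Sigma)
  : series S Sigma := fun w => a * r w.
Definition series_rscale (S : pzSemiRingType) (Sigma : finType) (r : series S Sigma) (a : S)
  : series S Sigma := fun w => r w * a.

From mathcomp Require Import all_boot all_algebra.
From Stdlib Require Import FunctionalExtensionality.
Set Implicit Arguments. Unset Strict Implicit. Unset Printing Implicit Defensive.
Import GRing.Theory.
Local Open Scope ring_scope.

(* Closure under addition comes from the disjoint union of two reversible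
   automata: a run never crosses between the summands, so the runs of the
   union are those of either automaton.  Closure under scalars comes from
   multiplying the initial (resp. final) weights, which leaves the
   transitions, hence reversibility, untouched. *)

Section Embedding.
Variables (S : pzSemiRingType) (Sigma : finType) (A C : wautomaton S Sigma).
Variable f : wstate A -> wstate C.
Hypothesis f_inj : injective f.
Hypothesis wtrans_f : forall p a q, wtrans (f p) a (f q) = wtrans p a q.
Hypothesis winit_f : forall p, winit (f p) = winit p.
Hypothesis wfin_f : forall p, wfin (f p) = wfin p.

Definition map_run (w : seq Sigma) (qs : {ffun 'I_(size w).+1 -> wstate A}) :
  {ffun 'I_(size w).+1 -> wstate C} := [ffun k => f (qs k)].

Lemma is_run_map w (qs : {ffun 'I_(size w).+1 -> wstate A}) :
  is_run (map_run qs) = is_run qs.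
Proof. by apply: eq_forallb => k; rewrite !ffunE wtrans_f. Qed.

Lemma run_weight_map w (qs : {ffun 'I_(size w).+1 -> wstate A}) :
  run_weight (map_run qs) = run_weight qs.
Proof.
rewrite /run_weight !ffunE winit_f wfin_f; congr (_ * _ * _).
by apply: eq_bigr => k _; rewrite !ffunE wtrans_f.
Qed.

Lemma map_run_inj w : injective (@map_run w).
Proof.
move=> qs qs' /ffunP eq_qs; apply/ffunP => k; apply: f_inj.
by have := eq_qs k; rewrite !ffunE.
Qed.

Lemma behaviour_embed w :
  \sum_(qs : {ffun 'I_(size w).+1 -> wstate C} |
          is_run qs && [forall k, qs k \in codom f]) run_weight qs
  = behaviour A w.
Proof.
rewrite (eq_bigl (mem (@map_run w @: [set qs | is_run qs]))); last first.
  move=> qs /=; apply/andP/imsetP => [[run_qs /forallP qs_f] | [qs' + ->]].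
    exists [ffun k => iinv (qs_f k)]; last by apply/ffunP => k; rewrite !ffunE f_iinv.
    suff map_qs : map_run [ffun k => iinv (qs_f k)] = qs by rewrite inE -is_run_map map_qs.
    by apply/ffunP => k; rewrite !ffunE f_iinv.
  rewrite inE -is_run_map => ->; split=> //.
  by apply/forallP => k; rewrite ffunE codom_f.
rewrite big_imset /=; last by move=> qs qs' _ _; apply: map_run_inj.
by apply: eq_big => qs; rewrite ?inE // => _; rewrite run_weight_map.
Qed.

End Embedding.

Section Union.
Variables (S : pzSemiRingType) (Sigma : finType) (A B : wautomaton S Sigma).

Definition wunion : wautomaton S Sigma :=
  @WAut S Sigma (wstate A + wstate B)%type
    (fun p a q => match p, q with
                  | inl p, inl q => wtrans p a q
                  | inr p, inr q => wtrans p a q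
                  | _, _ => 0 end)
    (fun p => match p with inl p => winit p | inr p => winit p end)
    (fun p => match p with inl p => wfin p | inr p => wfin p end).

Lemma reversible_wunion : reversible A -> reversible B -> reversible wunion.
Proof.
move=> [detA codetA] [detB codetB]; split.
  move=> [p|p] [q|q] [q'|q'] a //= q_ok q'_ok; rewrite ?eqxx // in q_ok q'_ok.
    by rewrite (detA _ _ _ _ q_ok q'_ok).
  by rewrite (detB _ _ _ _ q_ok q'_ok).
move=> [p|p] [p'|p'] [q|q] a //= p_ok p'_ok; rewrite ?eqxx // in p_ok p'_ok.
  by rewrite (codetA _ _ _ _ p_ok p'_ok).
by rewrite (codetB _ _ _ _ p_ok p'_ok).
Qed.

Lemma inr_notin_codom_inl (x : wstate B) : (inr x : wstate wunion) \notin codom inl.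
Proof. by apply/codomP => -[]. Qed.

Lemma codom_inr (u : wstate wunion) : (u \in codom inr) = (u \notin codom inl).
Proof.
case: u => x; last by rewrite codom_f inr_notin_codom_inl.
by rewrite codom_f; apply/codomP => -[].
Qed.

Lemma wtrans_wunion_side (p q : wstate wunion) a :
  wtrans p a q != 0 -> (q \in codom inl) = (p \in codom inl).
Proof.
case: p q => [p|p] [q|q] //=; rewrite ?eqxx // => _; first by rewrite !codom_f.
by rewrite !(negPf (inr_notin_codom_inl _)).
Qed.

Lemma run_wunion_side w (qs : {ffun 'I_(size w).+1 -> wstate wunion}) :
  is_run qs -> forall k, (qs k \in codom inl) = (qs ord0 \in codom inl).
Proof.
move=> /forallP run_qs [k]; elim: k => [|k IHk] lt_k.
  by rewrite (_ : Ordinal lt_k = ord0) //; apply: val_inj.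
have := run_qs (Ordinal (lt_k : (k < size w)%N)) => /wtrans_wunion_side.
have -> : lift ord0 (Ordinal (lt_k : (k < size w)%N)) = Ordinal lt_k by apply: val_inj.
rewrite -(IHk (ltnW lt_k)) => ->.
by rewrite (_ : widen_ord _ _ = Ordinal (ltnW lt_k)) //; apply: val_inj.
Qed.

Lemma behaviour_wunion w : behaviour wunion w = behaviour A w + behaviour B w.
Proof.
rewrite -(@behaviour_embed _ _ A wunion inl inl_inj) //.
rewrite -(@behaviour_embed _ _ B wunion inr inr_inj) //.
rewrite /behaviour.
rewrite (bigID (fun qs : {ffun 'I_(size w).+1 -> wstate wunion} => qs ord0 \in codom inl)) /=.
congr (_ + _); apply: eq_bigl => qs; apply: andb_id2l => /run_wunion_side side_qs.
  by apply/idP/forallP => [side0 k | /(_ ord0)]; rewrite ?side_qs.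
by apply/idP/forallP => [side0 k | /(_ ord0)]; rewrite codom_inr ?side_qs.
Qed.

End Union.

Section Scaling.
Variables (S : pzSemiRingType) (Sigma : finType) (A : wautomaton S Sigma) (alpha : S).

Definition wscalel : wautomaton S Sigma :=
  @WAut S Sigma (wstate A) (@wtrans _ _ A) (fun p => alpha * winit p) (@wfin _ _ A).

Definition wscaler : wautomaton S Sigma :=
  @WAut S Sigma (wstate A) (@wtrans _ _ A) (@winit _ _ A) (fun p => wfin p * alpha).

Lemma behaviour_wscalel w : behaviour wscalel w = alpha * behaviour A w.
Proof. by rewrite /behaviour mulr_sumr; apply: eq_bigr => qs _; rewrite /run_weight !mulrA. Qed.

Lemma behaviour_wscaler w : behaviour wscaler w = behaviour A w * alpha.
Proof. by rewrite /behaviour mulr_suml; apply: eq_bigr => qs _; rewrite /run_weight !mulrA. Qed.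

End Scaling.

Section RevClosure.
Variables (S : pzSemiRingType) (Sigma : finType).
Implicit Types (r s : series S Sigma) (alpha : S).

Lemma Rev_add r s : Rev r -> Rev s -> Rev (series_add r s).
Proof.
move=> [A [revA <-]] [B [revB <-]]; exists (wunion A B).
split; first exact: reversible_wunion.
by apply: functional_extensionality => w; rewrite behaviour_wunion.
Qed.

Lemma Rev_lscale alpha r : Rev r -> Rev (series_lscale alpha r).
Proof.
move=> [A [revA <-]]; exists (wscalel A alpha); split; first exact: revA.
by apply: functional_extensionality => w; rewrite behaviour_wscalel.
Qed.

Lemma Rev_rscale r alpha : Rev r -> Rev (series_rscale r alpha).
Proof.
move=> [A [revA <-]]; exists (wscaler A alpha); split; first exact: revA.
by apply: functional_extensionality => w; rewrite behaviour_wscaler.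
Qed.

End RevClosure.

Theorem proposition2 (S : pzSemiRingType) (Sigma : finType) (HSigma : (0 < #|Sigma|)%N)
  (r s : series S Sigma) (alpha : S) :
  Rev r -> Rev s ->
  Rev (series_add r s) /\ Rev (series_lscale alpha r) /\ Rev (series_rscale r alpha).
Proof.
move=> rev_r rev_s; split; first exact: Rev_add.
by split; [apply: Rev_lscale | apply: Rev_rscale].
Qed.
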